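(* Let $C$ be an $E$-linear code of length $2n$. Then: (1) if $C$ is free, $LSHull(C^{\perp_{S_L}})=LSHull(C)$; (2) if $C_{Res}\cap (C_{Tor})^{\perp_S}=\{0\}$ and $C_{Tor}=\mathbb{F}_2^{2n}$, then $RSHull(C^{\perp_{S_R}})=RSHull(C)$; (3) $SHull(C^{\perp_S})=SHull(C)$.
   Context: $E=\langle \kappa,\tau \mid 2\kappa=2\tau=0,\ \kappa^2=\kappa,\ \tau^2=\tau,\ \kappa\tau=\kappa,\ \tau\kappa=\tau\rangle$ is the non-unital ring $\{0,\kappa,\tau,\zeta\}$, $\zeta=\kappa+\tau$, with $e\kappa=e\tau=e$, $e\zeta=0$ for all $e\in E$. Every $e\in E$ is uniquely $u\kappa+v\zeta$ ($u,v\in\mathbb{F}_2$); $\pi(u\kappa+v\zeta)=u$, componentwise. An $E$-linear code of length $2n$ is a left $E$-submodule $C\subseteq E^{2n}$; $C_{Res}=\pi(C)$, $C_{Tor}=\{v\in\mathbb{F}_2^{2n}:\zeta v\in C\}$ (componentwise, $0\cdot\zeta=0,1\cdot\zeta=\zeta$); $C$ is free if $C_{Res}=C_{Tor}$. Symplectic inner product (over $E$ or $\mathbb{F}_2$): $\langle (u|v),(u'|v')\rangle_s=\sum_i u_iv'_i+\sum_i v_iu'_i$; for binary $B$, $B^{\perp_S}=\{z:\langle z,w\rangle_s=0\ \forall w\in B\}$. For $E$-linear $C$: $C^{\perp_{S_L}}=\{z\in E^{2n}:\langle z,w\rangle_s=0\ \forall w\in C\}$, $C^{\perp_{S_R}}=\{z\in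 E^{2n}:\langle w,z\rangle_s=0\ \forall w\in C\}$, $C^{\perp_S}=C^{\perp_{S_L}}\cap C^{\perp_{S_R}}$, $LSHull(C)=C\cap C^{\perp_{S_L}}$, $RSHull(C)=C\cap C^{\perp_{S_R}}$, $SHull(C)=C\cap C^{\perp_S}$. *)

From HB Require Import structures.
From mathcomp Require Import all_boot.
Set Implicit Arguments. Unset Strict Implicit. Unset Printing Implicit Defensive.

(* The non-unital ring E = {0, kappa, tau, zeta}, zeta = kappa + tau. *)
Inductive E := E0 | Ek | Et | Ez.

Definition E_to_ord (e : E) : 'I_4 :=
  match e with E0 => inord 0 | Ek => inord 1 | Et => inord 2 | Ez => inord 3 end.
Definition ord_to_E (i : 'I_4) : E :=
  match val i with 0 => E0 | 1 => Ek | 2 => Et | _ => Ez end.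
Lemma E_to_ordK : cancel E_to_ord ord_to_E.
Proof. by case; rewrite /ord_to_E /= inordK. Qed.
HB.instance Definition _ := Finite.copy E (can_type E_to_ordK).

Definition Eadd (a b : E) : E :=
  match a, b with
  | E0, x | x, E0 => x
  | Ek, Ek | Et, Et | Ez, Ez => E0
  | Ek, Et | Et, Ek => Ez
  | Ek, Ez | Ez, Ek => Et
  | Et, Ez | Ez, Et => Ek
  end.

(* multiplication: kappa^2 = kappa, tau^2 = tau, kappa tau = kappa,
   tau kappa = tau; hence e kappa = e tau = e and e zeta = 0. *)
Definition Emul (a b : E) : E :=
  match b with
  | E0 | Ez => E0
  | Ek | Et => a
  end.

(* pi (u kappa + v zeta) = u *)
Definition Epi (e : E) : bool :=
  match e with E0 | Ez => false | Ek | Et => true end.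

(* words of length 2n over E and over F_2 (= bool); coordinates
   lshift n i are the "u" part, rshift n i the "v" part. *)
Definition word (n : nat) := {ffun 'I_(n + n) -> E}.
Definition bword (n : nat) := {ffun 'I_(n + n) -> bool}.

Definition word0 n : word n := [ffun => E0].
Definition bword0 n : bword n := [ffun => false].
Definition wadd n (x y : word n) : word n := [ffun i => Eadd (x i) (y i)].
Definition wscale n (e : E) (x : word n) : word n := [ffun i => Emul e (x i)].

Definition Elinear n (C : {set word n}) : Prop :=
  [/\ word0 n \in C,
      (forall x y, x \in C -> y \in C -> wadd x y \in C) &
      (forall e x, x \in C -> wscale e x \in C)].

Definition CRes n (C : {set word n}) : {set bword n} :=
  [set [ffun i => Epi (x i)] | x : word n in C].
Definition zeta_of n (v : bword n) : word n :=
  [ffun i => if v i then Ez else E0].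
Definition CTor n (C : {set word n}) : {set bword n} :=
  [set v | zeta_of v \in C].
Definition free n (C : {set word n}) : Prop := CRes C = CTor C.

Definition sip n (x y : word n) : E :=
  Eadd (\big[Eadd/E0]_(i < n) Emul (x (lshift n i)) (y (rshift n i)))
       (\big[Eadd/E0]_(i < n) Emul (x (rshift n i)) (y (lshift n i))).
Definition bsip n (x y : bword n) : bool :=
  addb (\big[addb/false]_(i < n) (x (lshift n i) && y (rshift n i)))
       (\big[addb/false]_(i < n) (x (rshift n i) && y (lshift n i))).

Definition bperpS n (B : {set bword n}) : {set bword n} :=
  [set z | [forall w in B, ~~ bsip z w]].

Definition perpSL n (C : {set word n}) : {set word n} :=
  [set z | [forall w in C, sip z w == E0]].
Definition perpSR n (C : {set word n}) : {set word n} :=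
  [set z | [forall w in C, sip w z == E0]].
Definition perpS n (C : {set word n}) : {set word n} :=
  perpSL C :&: perpSR C.

Definition LSHull n (C : {set word n}) := C :&: perpSL C.
Definition RSHull n (C : {set word n}) := C :&: perpSR C.
Definition SHull n (C : {set word n}) := C :&: perpS C.

From HB Require Import structures.
From mathcomp Require Import all_boot ssralg zmodp matrix mxalgebra.
Set Implicit Arguments. Unset Strict Implicit. Unset Printing Implicit Defensive.
Import GRing.Theory.

(* Writing e = u κ + v ζ, the product e * e' equals e * π(e'), so a symplectic
   product <z, w>_s has coordinates (<π z, π w>_s, <ν z, π w>_s), where ν reads
   off the ζ-coordinate.  Hence an E-linear code is determined by the pair of
   binary codes (C_Res, C_Tor), namely C = {z | π z ∈ C_Res, ν z ∈ C_Tor}, and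
   each symplectic dual of C is again of this shape, with explicit binary
   parameters built from the binary symplectic duals of C_Res and C_Tor.  The
   three statements then reduce to B^⊥⊥ = B for binary linear codes B, which
   holds because the binary symplectic form is nondegenerate: the dimension of
   B^⊥ is 2n - dim B. *)

Local Open Scope ring_scope.

Section DotProduct.
Variable m : nat.
Local Notation bvec := {ffun 'I_m -> bool}.
Implicit Types (B : {set bvec}) (x y z b : bvec).

Definition dot x y : bool := \sum_i x i * y i.

Definition dotperp B : {set bvec} := [set z | [forall b in B, ~~ dot z b]].

Lemma dotC x y : dot x y = dot y x.
Proof. by apply: eq_bigr => i _; rewrite mulrC. Qed.

Lemma dot0l y : dot 0 y = 0.
Proof. by rewrite /dot big1 // => i _; rewrite ffunE mul0r. Qed.

Lemma dotDl x y b : dot (x + y) b = dot x b + dot y b.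
Proof. by rewrite /dot -big_split; apply: eq_bigr => i _; rewrite ffunE mulrDl. Qed.

Lemma sub_dotperpK B : B \subset dotperp (dotperp B).
Proof.
apply/subsetP => b bB; rewrite inE; apply/forall_inP => z; rewrite inE.
by move/forall_inP/(_ b bB); rewrite dotC.
Qed.

Definition rowvec x : 'rV[bool]_m := \row_i x i.
Definition ffun_of_row (v : 'rV[bool]_m) : bvec := [ffun i => v 0 i].

Lemma rowvecK : cancel rowvec ffun_of_row.
Proof. by move=> x; apply/ffunP => i; rewrite ffunE mxE. Qed.

Lemma ffun_of_rowK : cancel ffun_of_row rowvec.
Proof. by move=> v; apply/rowP => i; rewrite mxE ffunE. Qed.

Lemma ffun_of_row0 : ffun_of_row 0 = 0.
Proof. by apply/ffunP => i; rewrite !ffunE mxE. Qed.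

Lemma ffun_of_rowD u v : ffun_of_row (u + v) = ffun_of_row u + ffun_of_row v.
Proof. by apply/ffunP => i; rewrite !ffunE mxE. Qed.

Lemma rowvec_mul_tr_eq0 x y : (rowvec x *m (rowvec y)^T == 0) = ~~ dot x y.
Proof.
rewrite [rowvec x *m _]mx11_scalar -scalemx1 scalemx_eq0 oner_eq0 orbF.
rewrite mxE (eq_bigr (fun i => x i * y i)) ?eqbF_neg // => i _.
by rewrite !mxE.
Qed.

Definition span B : 'M[bool]_m := (\sum_(b in B) <<rowvec b>>)%MS.

Lemma rowvec_sub_span B b : b \in B -> (rowvec b <= span B)%MS.
Proof. by move=> bB; apply: (sumsmx_sup b) => //; rewrite genmxE. Qed.

(* Over F_2 a scalar multiple of b is 0 or b, so additive closure suffices. *)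
Lemma span_sub B v : addr_closed B -> (v <= span B)%MS -> ffun_of_row v \in B.
Proof.
move=> [B0 BD] /sub_sums_genmxP[u ->].
apply: (big_ind (fun w => ffun_of_row w \in B)) => [|a c aB cB|b bB].
- by rewrite ffun_of_row0.
- by rewrite ffun_of_rowD; apply: BD.
rewrite [u b]mx11_scalar mul_scalar_mx; case: (u b 0 0).
  by rewrite scale1r rowvecK.
by rewrite scale0r ffun_of_row0.
Qed.

Lemma dotperp_ker B z : (z \in dotperp B) = (rowvec z <= kermx (span B)^T)%MS.
Proof.
rewrite sub_kermx -trmx_eq0 trmx_mul trmxK -sub_kermx inE.
apply/forall_inP/sumsmx_subP => perp_z b bB.
  by rewrite genmxE sub_kermx rowvec_mul_tr_eq0 dotC perp_z.
by move: (perp_z b bB); rewrite genmxE sub_kermx rowvec_mul_tr_eq0 dotC.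
Qed.

Lemma span_dotperp B : (span (dotperp B) :=: kermx (span B)^T)%MS.
Proof.
apply/eqmxP/andP; split.
  by apply/sumsmx_subP => z zB; rewrite genmxE -dotperp_ker.
apply/row_subP => i; rewrite -[row i _]ffun_of_rowK; apply: rowvec_sub_span.
by rewrite dotperp_ker ffun_of_rowK row_sub.
Qed.

Lemma rank_span_dotperp B : \rank (span (dotperp B)) = (m - \rank (span B))%N.
Proof. by rewrite span_dotperp mxrank_ker mxrank_tr. Qed.

Lemma dotperpK B : addr_closed B -> dotperp (dotperp B) = B.
Proof.
move=> closedB; have sB_B2 := sub_dotperpK B.
have sW_W2 : (span B <= span (dotperp (dotperp B)))%MS.
  by apply/sumsmx_subP => b bB; rewrite genmxE rowvec_sub_span ?(subsetP sB_B2).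
have := mxrank_leqif_sup sW_W2.
rewrite !rank_span_dotperp subKn ?rank_leq_col // => /leqif_refl sW2_W.
apply/eqP; rewrite eqEsubset sB_B2 andbT; apply/subsetP => x xB.
by rewrite -(rowvecK x) span_sub // (submx_trans (rowvec_sub_span xB) sW2_W).
Qed.

End DotProduct.

Section BinarySymplectic.
Variable n : nat.
Implicit Types (A B : {set bword n}) (x y z u : bword n).

Definition lrswap (i : 'I_(n + n)) : 'I_(n + n) :=
  match split i with inl j => rshift n j | inr j => lshift n j end.

Lemma lrswap_lshift j : lrswap (lshift n j) = rshift n j.
Proof. by rewrite /lrswap (unsplitK (inl _ : 'I_n + 'I_n)). Qed.

Lemma lrswap_rshift j : lrswap (rshift n j) = lshift n j.
Proof. by rewrite /lrswap (unsplitK (inr _ : 'I_n + 'I_n)). Qed.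

Lemma lrswapK : involutive lrswap.
Proof.
move=> i; rewrite -(splitK i); case: (split i) => j /=.
  by rewrite lrswap_lshift lrswap_rshift.
by rewrite lrswap_rshift lrswap_lshift.
Qed.

Definition bswap x : bword n := [ffun i => x (lrswap i)].

Lemma bswapK : involutive bswap.
Proof. by move=> x; apply/ffunP => i; rewrite !ffunE lrswapK. Qed.

Lemma bsip_dot x y : bsip x y = dot x (bswap y).
Proof.
rewrite /dot big_split_ord /=; congr addb; apply: eq_bigr => i _.
  by rewrite ffunE lrswap_lshift.
by rewrite ffunE lrswap_rshift.
Qed.

Lemma dot_bswapl x y : dot (bswap x) y = dot x (bswap y).
Proof.
rewrite /dot (reindex_inj (inv_inj lrswapK)); apply: eq_bigr => i _.
by rewrite !ffunE lrswapK.
Qed.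

Lemma bsipC x y : bsip x y = bsip y x.
Proof. by rewrite !bsip_dot dotC dot_bswapl. Qed.

Lemma bperpS_dotperp B z : (z \in bperpS B) = (bswap z \in dotperp B).
Proof.
rewrite !inE; apply/forall_inP/forall_inP => perp_z w wB; move: (perp_z w wB);
by rewrite bsip_dot dot_bswapl.
Qed.

Lemma bperpS2 B : bperpS (bperpS B) = dotperp (dotperp B).
Proof.
apply/setP => z; rewrite !inE; apply/forall_inP/forall_inP => perp_z u uB.
  have : bswap u \in bperpS B by rewrite bperpS_dotperp bswapK.
  by move/perp_z; rewrite bsip_dot bswapK.
by rewrite bsip_dot; apply: perp_z; rewrite -bperpS_dotperp.
Qed.

Lemma bperpSK B : addr_closed B -> bperpS (bperpS B) = B.
Proof. by move=> closedB; rewrite bperpS2 dotperpK. Qed.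

Lemma bperpS_closed B : addr_closed (bperpS B).
Proof.
split=> [|x y]; rewrite !inE.
  by apply/forall_inP => w _; rewrite bsip_dot dot0l.
move=> /forall_inP perp_x /forall_inP perp_y; apply/forall_inP => w wB.
by rewrite bsip_dot dotDl -!bsip_dot (negbTE (perp_x w wB)) (negbTE (perp_y w wB)).
Qed.

Lemma bperpS0 B : bword0 n \in bperpS B.
Proof. by case: (bperpS_closed B). Qed.

Lemma bperpS_anti A B : A \subset B -> bperpS B \subset bperpS A.
Proof.
move=> /subsetP sAB; apply/subsetP => z; rewrite !inE => /forall_inP perp_z.
by apply/forall_inP => w /sAB /perp_z.
Qed.

Lemma bperpS_set0 : bperpS [set bword0 n] = [set: bword n].
Proof.
apply/setP => z; rewrite !inE; apply/forall_inP => w; rewrite inE => /eqP ->.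
by rewrite bsipC bsip_dot dot0l.
Qed.

Lemma bperpST : bperpS [set: bword n] = [set bword0 n].
Proof.
rewrite -bperpS_set0 bperpSK //; split=> [|x y]; rewrite ?set11 // !inE.
by move=> /eqP -> /eqP ->; rewrite addr0.
Qed.

End BinarySymplectic.

(* [e = Epi e κ + Enu e ζ] *)
Definition Enu (e : E) : bool := match e with Et | Ez => true | _ => false end.

Lemma Epi_add a b : Epi (Eadd a b) = Epi a (+) Epi b. Proof. by case: a; case: b. Qed.
Lemma Enu_add a b : Enu (Eadd a b) = Enu a (+) Enu b. Proof. by case: a; case: b. Qed.
Lemma Epi_mul a b : Epi (Emul a b) = Epi a && Epi b. Proof. by case: a; case: b. Qed.
Lemma Enu_mul a b : Enu (Emul a b) = Enu a && Epi b. Proof. by case: a; case: b. Qed.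

Lemma E_eq0 e : (e == E0) = ~~ Epi e && ~~ Enu e.
Proof. by case: e; [rewrite eqxx | apply/eqP..]. Qed.

Section Codes.
Variable n : nat.
Implicit Types (X Y R T : {set bword n}) (u v : bword n) (z w : word n) (C : {set word n}).

Definition wpi z : bword n := [ffun i => Epi (z i)].
Definition wnu z : bword n := [ffun i => Enu (z i)].

Lemma Epi_sip z w : Epi (sip z w) = bsip (wpi z) (wpi w).
Proof.
rewrite /sip /bsip Epi_add !(big_morph Epi Epi_add (erefl : Epi E0 = false)).
by congr addb; apply: eq_bigr => i _; rewrite Epi_mul !ffunE.
Qed.

Lemma Enu_sip z w : Enu (sip z w) = bsip (wnu z) (wpi w).
Proof.
rewrite /sip /bsip Enu_add !(big_morph Enu Enu_add (erefl : Enu E0 = false)).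
by congr addb; apply: eq_bigr => i _; rewrite Enu_mul !ffunE.
Qed.

Lemma sip_eq0 z w :
  (sip z w == E0) = ~~ bsip (wpi z) (wpi w) && ~~ bsip (wnu z) (wpi w).
Proof. by rewrite E_eq0 Epi_sip Enu_sip. Qed.

Definition mkword u v : word n :=
  [ffun i => if u i then (if v i then Et else Ek) else (if v i then Ez else E0)].

Lemma wpi_mkword u v : wpi (mkword u v) = u.
Proof. by apply/ffunP => i; rewrite !ffunE; case: (u i); case: (v i). Qed.

Lemma wnu_mkword u v : wnu (mkword u v) = v.
Proof. by apply/ffunP => i; rewrite !ffunE; case: (u i); case: (v i). Qed.

Definition code_of X Y : {set word n} := [set z | (wpi z \in X) && (wnu z \in Y)].

Lemma in_code_of X Y z : (z \in code_of X Y) = (wpi z \in X) && (wnu z \in Y).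
Proof. by rewrite inE. Qed.

Lemma setI_code_of X Y X' Y' :
  code_of X Y :&: code_of X' Y' = code_of (X :&: X') (Y :&: Y').
Proof. by apply/setP => z; rewrite !in_setI !in_code_of !in_setI andbACA. Qed.

Lemma perpSL_code_of X Y :
  bword0 n \in Y -> perpSL (code_of X Y) = code_of (bperpS X) (bperpS X).
Proof.
move=> Y0; apply/setP => z; rewrite in_code_of !inE.
apply/forall_inP/andP => [perp_z|[/forall_inP perp_pi /forall_inP perp_nu] w].
  split; apply/forall_inP => x xX;
  (have /perp_z : mkword x (bword0 n) \in code_of X Y
     by rewrite in_code_of wpi_mkword wnu_mkword xX Y0);
  by rewrite sip_eq0 wpi_mkword => /andP[].
by rewrite in_code_of sip_eq0 => /andP[wX _]; rewrite perp_pi ?perp_nu.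
Qed.

Lemma perpSR_code_of X Y : bword0 n \in X -> bword0 n \in Y ->
  perpSR (code_of X Y) = code_of (bperpS X :&: bperpS Y) [set: bword n].
Proof.
move=> X0 Y0; apply/setP => z; rewrite in_code_of in_setT andbT in_setI !inE.
apply/forall_inP/andP => [perp_z|[/forall_inP perp_X /forall_inP perp_Y] w].
  split; apply/forall_inP => x xX.
    have /perp_z : mkword x (bword0 n) \in code_of X Y.
      by rewrite in_code_of wpi_mkword wnu_mkword xX Y0.
    by rewrite sip_eq0 wpi_mkword bsipC => /andP[].
  have /perp_z : mkword (bword0 n) x \in code_of X Y.
    by rewrite in_code_of wpi_mkword wnu_mkword xX X0.
  by rewrite sip_eq0 wnu_mkword (bsipC x) => /andP[_].
rewrite in_code_of sip_eq0 => /andP[wX wY].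
by rewrite bsipC perp_X // bsipC perp_Y.
Qed.

Lemma perpS_code_of R T : bword0 n \in R -> R \subset T ->
  perpS (code_of R T) = code_of (bperpS T) (bperpS R).
Proof.
move=> R0 sRT; have T0 := subsetP sRT _ R0.
rewrite /perpS perpSL_code_of // perpSR_code_of // setI_code_of setIT.
by rewrite setIA setIid; congr code_of; apply/setIidPr/bperpS_anti.
Qed.

Lemma perpSR_code_of_setT X : bword0 n \in X ->
  perpSR (code_of X [set: bword n]) = code_of [set bword0 n] [set: bword n].
Proof.
move=> X0; rewrite perpSR_code_of ?inE // bperpST.
by congr code_of; apply/setIidPr; rewrite sub1set bperpS0.
Qed.

Lemma CResP C u : reflect (exists2 w, w \in C & u = wpi w) (u \in CRes C).
Proof. exact: imsetP. Qed.

Section ELinearCode.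
Variable C : {set word n}.
Hypothesis linC : Elinear C.

Lemma CRes_closed : addr_closed (CRes C).
Proof.
have [C0 CD _] := linC; split.
  by apply/CResP; exists (word0 n) => //; apply/ffunP => i; rewrite !ffunE.
move=> x y /CResP[a aC ->] /CResP[b bC ->]; apply/CResP; exists (wadd a b).
  exact: CD.
by apply/ffunP => i; rewrite !ffunE Epi_add.
Qed.

Lemma CTor_closed : addr_closed (CTor C).
Proof.
have [C0 CD _] := linC; split=> [|x y]; rewrite !inE.
  suff -> : zeta_of (bword0 n) = word0 n by [].
  by apply/ffunP => i; rewrite !ffunE.
move=> xT yT; suff -> : zeta_of (x + y) = wadd (zeta_of x) (zeta_of y) by apply: CD.
by apply/ffunP => i; rewrite !ffunE; case: (x i); case: (y i).
Qed.

Lemma CRes_sub_CTor : CRes C \subset CTor C.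
Proof.
have [_ _ CZ] := linC; apply/subsetP => x /CResP[w wC ->]; rewrite inE.
suff -> : zeta_of (wpi w) = wscale Ez w by apply: CZ.
by apply/ffunP => i; rewrite !ffunE; case: (w i).
Qed.

(* z = κ π(w) + ζ ν(z) for any w ∈ C with π w = π z, and ζ ν(z) = z + κ z. *)
Lemma Elinear_code_of : C = code_of (CRes C) (CTor C).
Proof.
have [_ CD CZ] := linC; apply/setP => z; rewrite in_code_of.
apply/idP/andP => [zC|[/CResP[w wC pi_zw]]].
  split; first by apply/CResP; exists z.
  rewrite inE; suff -> : zeta_of (wnu z) = wadd z (wscale Ek z) by rewrite CD ?CZ.
  by apply/ffunP => i; rewrite !ffunE; case: (z i).
rewrite inE => nuT; suff -> : z = wadd (wscale Ek w) (zeta_of (wnu z)).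
  by rewrite CD ?CZ.
apply/ffunP => i; have := congr1 (fun f : bword n => f i) pi_zw; rewrite !ffunE.
by case: (z i); case: (w i).
Qed.

Lemma perpSLK : free C -> perpSL (perpSL C) = C.
Proof.
move=> freeC; have closedR := CRes_closed; have [R0 _] := closedR.
by rewrite Elinear_code_of -freeC !perpSL_code_of ?bperpS0 // bperpSK.
Qed.

Lemma perpSK : perpS (perpS C) = C.
Proof.
have closedR := CRes_closed; have closedT := CTor_closed; have [R0 _] := closedR.
rewrite Elinear_code_of !perpS_code_of ?bperpS0 ?bperpS_anti ?CRes_sub_CTor //.
by rewrite !bperpSK.
Qed.

End ELinearCode.
End Codes.

Theorem mainTheorem14 (n : nat) (C : {set word n}) :
  Elinear C ->
  (free C -> LSHull (perpSL C) = LSHull C) /\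
  (CRes C :&: bperpS (CTor C) = [set bword0 n] ->
   CTor C = [set: bword n] ->
   RSHull (perpSR C) = RSHull C) /\
  SHull (perpS C) = SHull C.
Proof.
move=> linC; split; [|split].
- by move=> freeC; rewrite /LSHull perpSLK // setIC.
- (* the first hypothesis follows from the second, as bperpS [set: _] = [set 0] *)
  move=> _ torT; have [R0 _] := CRes_closed linC.
  rewrite /RSHull (Elinear_code_of linC) torT !perpSR_code_of_setT ?set11 //.
  rewrite setIid setI_code_of setIid; congr code_of.
  by symmetry; apply/setIidPr; rewrite sub1set.
- by rewrite /SHull perpSK // setIC.
Qed.
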